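(* Let $G$ be a group, $F$ a field of characteristic $0$, and let $R=M_n(F)$ carry an elementary $G$-grading (induced by an arbitrary tuple $(g_1,\dots,g_n)\in G^n$). If $m=x_1x_2\cdots x_k$ is a multilinear graded monomial which is a graded identity of $R$ and $k>n$, then there is a graded monomial identity $N$ of $R$ of length at most $n$ such that $m$ belongs to the $T_G$-ideal generated by $N$. Consequently, all graded monomial identities of $R$ follow from those of length at most $n$.
   Context: The elementary $G$-grading on $M_n(F)$ induced by $(g_1,\dots,g_n)\in G^n$ is $R=\bigoplus_g R_g$ with $R_g=\mathrm{span}\{e_{pq}: g_p^{-1}g_q=g\}$. Graded polynomials live in the free $G$-graded algebra on a set of variables each having a prescribed degree in $G$; a graded polynomial is a graded identity of $R$ if it vanishes under every substitution of each variable $x$ by an element of $R_{\deg x}$. The length of a monomial is its usual degree (number of variables counted with multiplicity). A $T_G$-ideal is an ideal of the free $G$-graded algebra invariant under all endomorphisms preserving the degrees of variables. *)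

From HB Require Import structures.
From mathcomp Require Import all_boot all_order all_algebra.
Set Implicit Arguments. Unset Strict Implicit. Unset Printing Implicit Defensive.
Import GRing.Theory.

Section FreeGraded.
Variables (G : groupType) (F : fieldType).

(* Variables of the free G-graded algebra: countably many of each degree.
   The variable (g, i) has degree g. *)
Definition var := (G * nat)%type.
Definition vdeg (x : var) : G := x.1.

Definition word := seq var.
Definition wdeg (w : word) : G := foldr (fun x acc => (vdeg x * acc)%g) 1%g w.

(* Graded polynomials, represented as formal finite sums of (coefficient, monomial).
   The polynomial represented is the coefficient function [coef p]. *)
Definition poly := seq (F * word).
Definition coef (p : poly) (w : word) : F := \sum_(t <- p | t.2 == w) t.1.
Definition pmono (w : word) : poly := [:: (1%R, w)].
Definition pone : poly := pmono [::].
Definition pscale (c : F) (p : poly) : poly := [seq (c * t.1, t.2)%R | t <- p].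
Definition pmul (p q : poly) : poly := [seq (t.1 * u.1, t.2 ++ u.2)%R | t <- p, u <- q].

Definition psubst (phi : var -> poly) (p : poly) : poly :=
  flatten [seq pscale t.1 (foldr (fun x acc => pmul (phi x) acc) pone t.2) | t <- p].

Definition graded_subst (phi : var -> poly) : Prop :=
  forall x w, coef (phi x) w != 0%R -> wdeg w = vdeg x.

Definition TG_ideal (I : (word -> F) -> Prop) : Prop :=
  [/\ I (coef [::]),
      (forall p q, I (coef p) -> I (coef q) -> I (coef (p ++ q))),
      (forall c p, I (coef p) -> I (coef (pscale c p))),
      (forall a p b, I (coef p) -> I (coef (pmul a (pmul p b)))) &
      (forall phi, graded_subst phi -> forall p, I (coef p) -> I (coef (psubst phi p)))].

Definition in_TG_gen (S : word -> Prop) (f : word -> F) : Prop :=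
  forall I, TG_ideal I -> (forall N, S N -> I (coef (pmono N))) -> I f.

Definition in_elem_comp (n : nat) (g : 'I_n -> G) (h : G) (A : 'M[F]_n) : Prop :=
  forall p q, A p q != 0%R -> ((g p)^-1 * g q)%g = h.

Definition evalw (n : nat) (r : var -> 'M[F]_n) (w : word) : 'M[F]_n :=
  foldr (fun x acc => (r x *m acc)%R) (1%:M)%R w.
Definition evalp (n : nat) (r : var -> 'M[F]_n) (p : poly) : 'M[F]_n :=
  \sum_(t <- p) t.1 *: evalw r t.2.

Definition graded_id (n : nat) (g : 'I_n -> G) (p : poly) : Prop :=
  forall r : var -> 'M[F]_n, (forall x, in_elem_comp g (vdeg x) (r x)) -> evalp r p = 0%R.

End FreeGraded.

From HB Require Import structures.
From mathcomp Require Import all_boot all_order all_algebra zify.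
Set Implicit Arguments. Unset Strict Implicit. Unset Printing Implicit Defensive.
Import GRing.Theory.

(* An evaluation of a monomial x_1 ... x_k on homogeneous matrices has a nonzero
   (p, q) entry only along a sequence of rows p = p_0, ..., p_k with
   g_{p_i} = g_p deg(x_1 ... x_i).  Conversely, substituting for each variable the
   0/1 matrix of all matrix units of its degree counts these sequences, so in
   characteristic 0 the monomial is a graded identity iff, from every starting row p,
   the prefix degree g_p deg(x_1 ... x_i) leaves {g_1, ..., g_n} for some 1 <= i <= k.
   Fix one such exit position for each of the n rows.  If k > n, some position j in
   1..k is the exit position of no row.  If j < k, merge x_j x_(j+1) into a fresh
   variable of degree deg x_j deg x_(j+1): all other prefix degrees survive, and the
   original monomial is a graded substitution instance of the merged one.  If j = k,
   drop x_k, of which the original monomial is a right multiple.  Iterate down to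
   length n. *)

Lemma wdeg_cat (G : groupType) (u v : word G) : wdeg (u ++ v) = (wdeg u * wdeg v)%g.
Proof. by elim: u => /= [|x u ->]; rewrite ?mul1g ?mulgA. Qed.

Section Walks.
Variables (G : groupType) (n : nat) (g : 'I_n -> G).

Definition walkable (a : G) (w : word G) : bool :=
  all (fun i => (a * wdeg (take i w))%g \in codom g) (iota 0 (size w).+1).

Lemma walkable_nil a : walkable a [::] = (a \in codom g).
Proof. by rewrite /walkable /= mulg1 andbT. Qed.

Lemma walkable_cons a x w :
  walkable a (x :: w) = (a \in codom g) && walkable (a * vdeg x)%g w.
Proof.
rewrite /walkable -[iota 0 _]/(0 :: iota (1 + 0) (size w).+1) iotaDl /= mulg1.
rewrite all_map add0n mulgA; congr (_ && (_ && _)).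
by apply: eq_all => i /=; rewrite mulgA.
Qed.

Lemma walkable_codom a w : walkable a w -> a \in codom g.
Proof. by case/andP; rewrite take0 mulg1. Qed.

Lemma walkablePn a w :
  reflect (exists2 i, i <= size w & (a * wdeg (take i w))%g \notin codom g)
          (~~ walkable a w).
Proof.
by apply: (iffP allPn) => -[i]; rewrite ?mem_iota ?ltnS => i_le i_blocked; exists i;
  rewrite ?mem_iota ?ltnS.
Qed.

Definition degmx_nat (x : var G) : 'M[nat]_n :=
  \matrix_(p, q) (((g p)^-1 * g q)%g == vdeg x : nat).

Definition evalw_degmx_nat (w : word G) : 'M[nat]_n :=
  foldr (fun x acc => degmx_nat x *m acc)%R 1%:M%R w.

Lemma walkable_evalw_degmx_nat w p :
  walkable (g p) w -> exists q, 0 < evalw_degmx_nat w p q.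
Proof.
elim: w p => [|x w IHw] p; first by exists p; rewrite mxE eqxx.
rewrite walkable_cons => /andP [_ walk_px].
have /codomP [j gj] := walkable_codom walk_px.
have [q Eq] : exists q, 0 < evalw_degmx_nat w j q by apply: IHw; rewrite -gj.
exists q; rewrite [evalw_degmx_nat _]/= mxE (bigD1 j) //= mxE -gj mulKg eqxx mul1r.
exact: ltn_addr.
Qed.

Section Evaluation.
Variable F : fieldType.
Local Open Scope ring_scope.

Lemma evalw_neq0_walkable (r : var G -> 'M[F]_n) :
    (forall x, in_elem_comp g (vdeg x) (r x)) ->
  forall w p q, evalw r w p q != 0 -> walkable (g p) w.
Proof.
move=> r_graded; elim=> [|x w IHw] p q; first by rewrite walkable_nil codom_f.
rewrite [evalw r _]/= mxE.
have [j /= |r0] := pickP (fun j => r x p j * evalw r w j q != 0); last first.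
  by rewrite big1 ?eqxx // => j _; apply/eqP/negbFE/r0.
rewrite mulf_eq0 negb_or => /andP [rxpj /IHw walk_j] _.
by rewrite walkable_cons codom_f -(r_graded x p j rxpj) mulVKg.
Qed.

Definition degmx (x : var G) : 'M[F]_n := map_mx (GRing.natmul 1) (degmx_nat x).

Lemma degmx_graded x : in_elem_comp g (vdeg x) (degmx x).
Proof.
move=> p q; rewrite !mxE.
by case: (eqVneq ((g p)^-1 * g q)%g (vdeg x)) => // _; rewrite eqxx.
Qed.

Lemma evalw_degmx w : evalw degmx w = map_mx (GRing.natmul 1) (evalw_degmx_nat w).
Proof.
elim: w => [|x w IHw] /=; first by rewrite map_scalar_mx rmorph1.
by rewrite map_mxM IHw.
Qed.

Lemma evalp_pmono (r : var G -> 'M[F]_n) w : evalp r (pmono F w) = evalw r w.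
Proof. by rewrite /evalp big_seq1 scale1r. Qed.

Lemma graded_id_pmonoP w : [pchar F] =i pred0 ->
  graded_id g (pmono F w) <-> forall p, ~~ walkable (g p) w.
Proof.
move=> /pcharf0P charF0; split=> [id_w p | nowalk r r_graded].
  apply/negP => /walkable_evalw_degmx_nat [q]; rewrite lt0n -charF0.
  have := id_w _ degmx_graded; rewrite evalp_pmono evalw_degmx.
  by move=> /matrixP /(_ p q); rewrite !mxE => ->; rewrite eqxx.
rewrite evalp_pmono; apply/matrixP => p q; rewrite mxE.
apply: contraNeq (nowalk p); exact: evalw_neq0_walkable.
Qed.

End Evaluation.
End Walks.

Lemma exists_unhit (n k : nat) (P : 'I_n -> pred nat) :
    n < k -> (forall p, exists2 i, 0 < i <= k & P p i) ->
  exists2 j, 0 < j <= k & forall p, exists2 i, P p i & i != j.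
Proof.
move=> n_lt_k hitP.
have ex_hit p : exists i, (0 < i <= k) && P p i.
  by have [i i_bnd Pi] := hitP p; exists i; rewrite i_bnd.
pose W p := xchoose (ex_hit p).
have /allPn [j j_in jW] : ~~ all (mem (codom W)) (iota 1 k).
  apply: contraTN n_lt_k => /allP iota_sub; rewrite -leqNgt.
  by rewrite -(size_iota 1 k) -(card_ord n) -(size_codom W) uniq_leq_size ?iota_uniq.
exists j; first by move: j_in; rewrite mem_iota add1n ltnS.
move=> p; have /andP [_ PW] := xchooseP (ex_hit p).
by exists (W p) => //; apply: contraNneq jW => <-; apply: codom_f.
Qed.

Section TGideals.
Variables (G : groupType) (F : fieldType).
Implicit Types (u v w : word G) (S : word G -> Prop).

Lemma in_TG_gen_gen S w : S w -> in_TG_gen S (coef (pmono F w)).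
Proof. by move=> Sw I _; apply. Qed.

Lemma in_TG_gen_trans S S' (f : word G -> F) :
    (forall w, S w -> in_TG_gen S' (coef (pmono F w))) ->
  in_TG_gen S f -> in_TG_gen S' f.
Proof. by move=> SS' Sf I I_TG IS'; apply: Sf => // w /SS'; apply. Qed.

Lemma pmul_pmono u v : pmul (pmono F u) (pmono F v) = pmono F (u ++ v).
Proof. by rewrite /pmul /= mulr1. Qed.

Lemma in_TG_gen_mul u w v : in_TG_gen (eq^~ w) (coef (pmono F (u ++ w ++ v))).
Proof.
by move=> I [_ _ _ I_mul _] Iw; rewrite -!pmul_pmono; apply/I_mul/Iw.
Qed.

Lemma psubst_pmono (f : var G -> word G) w :
  psubst (fun x => pmono F (f x)) (pmono F w) = pmono F (flatten (map f w)).
Proof.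
rewrite /psubst /= cats0; suff -> : foldr (fun x => pmul (pmono F (f x))) (pone G F) w
    = pmono F (flatten (map f w)) by rewrite /= mul1r.
by elim: w => //= x w ->; rewrite pmul_pmono.
Qed.

Lemma in_TG_gen_subst (f : var G -> word G) w :
    (forall x, wdeg (f x) = vdeg x) ->
  in_TG_gen (eq^~ w) (coef (pmono F (flatten (map f w)))).
Proof.
move=> f_deg I [_ _ _ _ I_subst] Iw; rewrite -psubst_pmono.
apply: I_subst (Iw _ erefl) => x w'; rewrite /coef big_cons big_nil /=.
by have [<- _ | _] := eqVneq (f x) w'; [apply: f_deg | rewrite eqxx].
Qed.

Lemma exists_fresh_var (a : G) w : exists2 z : var G, vdeg z = a & z \notin w.
Proof.
have le_sumn s i : i \in s -> i <= sumn s.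
  by elim: s => //= j s IHs; rewrite inE => /orP [/eqP -> | /IHs]; lia.
exists (a, (sumn (map snd w)).+1) => //.
by apply/negP => /(map_f snd) /le_sumn; rewrite ltnn.
Qed.

Lemma in_TG_gen_merge u x y v z :
    vdeg z = (vdeg x * vdeg y)%g -> z \notin u ++ v ->
  in_TG_gen (eq^~ (u ++ z :: v)) (coef (pmono F (u ++ x :: y :: v))).
Proof.
move=> z_deg z_fresh; pose f t := if t == z then [:: x; y] else [:: t].
have -> : u ++ x :: y :: v = flatten (map f (u ++ z :: v)).
  have f_id s : z \notin s -> flatten (map f s) = s.
    elim: s => //= t s IHs; rewrite inE negb_or => /andP [zt /IHs ->].
    by rewrite /f eq_sym (negbTE zt).
  rewrite map_cat flatten_cat /= {2}/f eqxx /= !f_id //;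
    by apply: contra z_fresh; rewrite mem_cat => ->; rewrite ?orbT.
apply: in_TG_gen_subst => t; rewrite /f; case: eqP => [-> | _] /=; by rewrite ?mulg1.
Qed.

End TGideals.

Section Shortening.
Variables (G : groupType) (F : fieldType) (n : nat) (g : 'I_n -> G).
Implicit Types (u v m : word G).

Lemma blocked_merge a u x y v z i :
    vdeg z = (vdeg x * vdeg y)%g -> i <= size (u ++ x :: y :: v) -> i != (size u).+1 ->
    (a * wdeg (take i (u ++ x :: y :: v)))%g \notin codom g ->
  ~~ walkable g a (u ++ z :: v).
Proof.
move=> z_deg i_le i_neq blocked; apply/walkablePn.
have [i_le_u | u_lt_i] := leqP i (size u).
  exists i; first by rewrite size_cat (leq_trans i_le_u) ?leq_addr.
  by rewrite takel_cat // in blocked *; rewrite takel_cat.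
have [k ik] : exists k, i = size u + k.+2 by exists (i - (size u).+2); lia.
subst i; exists (size u + k.+1); first by move: i_le; rewrite !size_cat /= !addnS.
move: blocked; rewrite !take_cat !ltnNge !leq_addr /= !addKn /= !wdeg_cat /=.
by rewrite z_deg !mulgA.
Qed.

Lemma nowalk_shorten m :
    (forall p, ~~ walkable g (g p) m) -> n < size m ->
  exists m', [/\ size m' = (size m).-1, forall p, ~~ walkable g (g p) m' &
                 in_TG_gen (eq^~ m') (coef (pmono F m))].
Proof.
move=> nowalk n_lt_m.
have blocked p : exists2 i, 0 < i <= size m &
    (i <= size m) && ((g p * wdeg (take i m))%g \notin codom g).
  have /walkablePn [i i_le gi] := nowalk p; exists i; rewrite ?i_le //= andbT.
  by rewrite lt0n; apply: contraNneq gi => ->; rewrite take0 mulg1 codom_f.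
have {blocked} [j /andP [j_gt0 j_le_m] avoid_j] := exists_unhit n_lt_m blocked.
have [j_lt_m | j_ge_m] := ltnP j (size m).
  have [u [x [y [v [m_eq size_u]]]]] :
      exists u x y v, m = u ++ x :: y :: v /\ size u = j.-1.
    exists (take j.-1 m); move: (cat_take_drop j.-1 m) (size_drop j.-1 m).
    case: (drop j.-1 m) => [|x [|y v]] /= m_eq size_d; try lia.
    by exists x, y, v; rewrite m_eq size_take; split => //; case: ltnP => //; lia.
  have [z z_deg z_fresh] := exists_fresh_var (vdeg x * vdeg y)%g (u ++ v).
  exists (u ++ z :: v); split; first by rewrite m_eq !size_cat /= !addnS.
    move=> p; have [i /andP [i_le blocked_i] i_neq_j] := avoid_j p.
    by apply: (blocked_merge z_deg (i := i)); rewrite -?m_eq // size_u prednK.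
  by rewrite m_eq; apply: in_TG_gen_merge.
case/lastP: m => [|s x] in nowalk n_lt_m j_le_m j_ge_m avoid_j *; first by [].
exists s; split; first by rewrite size_rcons.
  move=> p; have [i /andP [i_le blocked_i] i_neq_j] := avoid_j p.
  have i_le_s : i <= size s by rewrite size_rcons in i_le j_le_m j_ge_m; lia.
  by apply/walkablePn; exists i; rewrite // -cats1 takel_cat in blocked_i.
by rewrite -cats1 -[s]cat0s -catA; apply: in_TG_gen_mul.
Qed.

Lemma nowalk_reduce m : (forall p, ~~ walkable g (g p) m) ->
  exists N, [/\ size N <= n, forall p, ~~ walkable g (g p) N &
                in_TG_gen (eq^~ N) (coef (pmono F m))].
Proof.
have [k] := ubnP (size m); elim: k m => // k IHk m size_m nowalk.
have [m_small | n_lt_m] := leqP (size m) n.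
  by exists m; split; last exact: in_TG_gen_gen.
have [m' [size_m' nowalk' m_m']] := nowalk_shorten nowalk n_lt_m.
have [|N [size_N nowalk_N m'_N]] := IHk m' _ nowalk'; first by rewrite size_m'; lia.
by exists N; split; last by apply: in_TG_gen_trans m_m' => _ ->.
Qed.

End Shortening.

Theorem mainTheorem4 (G : groupType) (F : fieldType) (n : nat) (g : 'I_n -> G) :
  [pchar F]%R =i pred0 ->
  (forall m : word G,
      uniq m -> n < size m -> graded_id g (pmono F m) ->
      exists N : word G,
        size N <= n /\ graded_id g (pmono F N) /\
        in_TG_gen (fun N' => N' = N) (coef (pmono F m))) /\
  (forall m : word G,
      graded_id g (pmono F m) ->
      in_TG_gen (fun N => size N <= n /\ graded_id g (pmono F N)) (coef (pmono F m))).
Proof.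
move=> charF0.
have reduce m : graded_id g (pmono F m) -> exists N : word G,
    [/\ size N <= n, graded_id g (pmono F N) & in_TG_gen (eq^~ N) (coef (pmono F m))].
  move=> /(graded_id_pmonoP g _ charF0) /(nowalk_reduce F) [N [size_N nowalk_N m_N]].
  by exists N; split; rewrite ?(graded_id_pmonoP g N charF0).
split=> [m _ _ /reduce [N [size_N id_N m_N]] | m /reduce [N [size_N id_N m_N]]].
  by exists N.
by apply: in_TG_gen_trans m_N => _ ->; apply: in_TG_gen_gen.
Qed.
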